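(* Let $n \ge 2$, $k \ge 1$ and $n_i, m_i \in \mathbb{Z}\setminus\{0\}$ for $1 \le i \le k$. Put $n_{k+1} = 1 - \sum_{i=1}^k n_i$ and $m_{k+1} = 1 - \sum_{i=1}^k m_i$. (I) If $n_i' \equiv n_i \pmod n$ and $m_i' \equiv m_i \pmod n$ for all $1\le i\le k$, then $\mathcal{P}_n(n_1,\dots,n_k;m_1,\dots,m_k) \simeq_Q \mathcal{P}_n(n_1',\dots,n_k';m_1',\dots,m_k')$. (II) $\mathcal{P}_n(n_1,\dots,n_k;m_1,\dots,m_k) \simeq_Q \mathcal{P}_n(n_2,\dots,n_{k+1};m_2,\dots,m_{k+1})$. (III) $\mathcal{P}_n(n_1,\dots,n_k;m_1,\dots,m_k) \simeq_Q \mathcal{P}_n(m_1,\dots,m_k;n_2,\dots,n_{k+1})$.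
   Context: For integers $n\ge 2$, $k\ge 0$, $n_1,\dots,n_k,m_1,\dots,m_k$, with $n_{k+1} = 1 - \sum_{i=1}^k n_i$, $m_{k+1} = 1 - \sum_{i=1}^k m_i$, $\mathcal{P}_n(n_1,\dots,n_k;m_1,\dots,m_k) = \langle x, y \mid x^n y^{-2},\ x^{n_1} y x^{m_1} y^{-1} \cdots x^{n_{k+1}} y x^{m_{k+1}} y^{-1} \rangle$. Two finite presentations on the same generators are $Q$-equivalent ($\simeq_Q$) if related by a finite sequence of the moves: replace a relator $r_i$ by $r_ir_j$ ($j\neq i$); replace $r_i$ by $r_i^{-1}$; replace $r_i$ by $wr_iw^{-1}$ for some $w$ in the free group on the generators. *)

(* free group on {x, y} via freely reduced words. *)
From mathcomp Require Import all_boot all_order all_algebra.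
From Stdlib Require Import Relations.
Set Implicit Arguments. Unset Strict Implicit. Unset Printing Implicit Defensive.
Import GRing.Theory Num.Theory.

(* A letter: (is_y, is_inverse).  (false,false) = x, (false,true) = x^-1,
   (true,false) = y, (true,true) = y^-1. *)
Definition letter := (bool * bool)%type.
Definition word := seq letter.

Definition lx : letter := (false, false).
Definition ly : letter := (true, false).
Definition linv (a : letter) : letter := (a.1, ~~ a.2).

Definition red (w : word) : word :=
  foldr (fun a acc => match acc with
                      | b :: t => if b == linv a then t else a :: acc
                      | [::] => [:: a] end) [::] w.

Definition fmul (u v : word) : word := red (u ++ v).
Definition finv (w : word) : word := rev (map linv w).

Definition wpow (a : letter) (m : int) : word :=
  match m with
  | Posz k => nseq k a
  | Negz k => nseq k.+1 (linv a)
  end.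

(* A finite presentation on the generators x, y: its list of relators. *)
Definition presentation := seq word.

Inductive Qmove (P : presentation) : presentation -> Prop :=
  | Qmul i j : i < size P -> j < size P -> i != j ->
      Qmove P (set_nth [::] P i (fmul (nth [::] P i) (nth [::] P j)))
  | Qinv i : i < size P ->
      Qmove P (set_nth [::] P i (finv (nth [::] P i)))
  | Qconj i (w : word) : i < size P ->
      Qmove P (set_nth [::] P i (fmul (fmul w (nth [::] P i)) (finv w))).

(* Q-equivalence: related by a finite sequence of Q-moves, relators being
   regarded as elements of the free group (i.e. up to free reduction). *)
Definition Qequiv (P P' : presentation) : Prop :=
  clos_refl_trans presentation Qmove (map red P) (map red P').

Definition last_exp (ns : seq int) : int := (1 - \sum_(a <- ns) a)%R.

Definition block (a b : int) : word :=
  wpow lx a ++ [:: ly] ++ wpow lx b ++ [:: linv ly].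

(* P_n(n_1..n_k; m_1..m_k) = < x, y | x^n y^{-2}, prod_{i=1}^{k+1} x^{n_i} y x^{m_i} y^{-1} > *)
Definition Pn (n : nat) (ns ms : seq int) : presentation :=
  [:: nseq n lx ++ nseq 2 (linv ly);
      flatten [seq block ab.1 ab.2 | ab <- zip (rcons ns (last_exp ns))
                                              (rcons ms (last_exp ms))] ].

From Pilot Require Import Defs.
From mathcomp Require Import all_boot all_order all_algebra.
From mathcomp Require Import ring.
From Stdlib Require Import Relations.
Import GRing.Theory Num.Theory.
(* Imported again so that [Defs.finv] shadows [fingraph.finv]. *)
Import Defs.
Set Implicit Arguments. Unset Strict Implicit. Unset Printing Implicit Defensive.

(* A two-relator presentation <x, y | r, u> is Q-equivalent to <x, y | r, v>
   whenever v is obtained from u by a cyclic permutation (conjugate u) or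
   represents the same element of the one-relator group <x, y | r> (multiply u
   by conjugates of r and r^-1, conjugating r back and forth around each such
   product).  For r = x^n y^-2 the element x^n = y^2 is central in <x, y | r>.
   (I) Changing an exponent by a multiple of n multiplies the relator by a
   central power of x, which can be collected at the end; the collected
   exponent is the change of the exponent sums, which is 0 since both families
   of exponents sum to 1.  (II) is a cyclic permutation of the second relator.
   (III) Moving x^(n_1) cyclically to the end turns the relator into the
   product of the y x^(m_i) y^-1 x^(n_(i+1)); as y^2 is central,
   y x^m y^-1 = y^-1 x^m y, and conjugating by y yields the product of the
   x^(m_i) y x^(n_(i+1)) y^-1. *)

(** * Free reduction *)

Definition red_step (a : letter) (w : word) : word :=
  if w is b :: t then (if b == linv a then t else a :: w) else [:: a].

Definition reduced (w : word) : bool := sorted (fun a b => b != linv a) w.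

Lemma linvK : involutive linv.
Proof. by case=> [] [] []. Qed.

Lemma red_step_reduced a w : reduced w -> reduced (red_step a w).
Proof.
case: w => [|b t] //=; case: ifP => [_|hb h] /=; last by rewrite hb h.
by case: t => //= c t /andP[].
Qed.

Lemma red_reduced w : reduced (red w).
Proof. by elim: w => //= a w IH; apply: red_step_reduced. Qed.

Lemma red_id w : reduced w -> red w = w.
Proof.
elim: w => //= a t IH h.
rewrite IH; last by case: t h {IH} => //= c t /andP[].
by case: t h {IH} => //= c t /andP[/negbTE ->].
Qed.

Lemma redK w : red (red w) = red w.
Proof. exact/red_id/red_reduced. Qed.

Lemma red_stepK a w : reduced w -> red_step a (red_step (linv a) w) = w.
Proof.
case: w => [|b t] /=; first by rewrite eqxx.
rewrite linvK; case: eqP => [->|_] /=; last by rewrite eqxx.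
by case: t => //= c t /andP[/negbTE ->].
Qed.

Definition red_act (u w : word) : word := foldr red_step w u.

Lemma red_cat u v : red (u ++ v) = red_act u (red v).
Proof. by elim: u => //= a u ->. Qed.

Lemma red_act_reduced u w : reduced w -> reduced (red_act u w).
Proof. by elim: u => //= a u IH h; apply/red_step_reduced/IH. Qed.

Lemma red_act_step a u w :
  reduced w -> red_act (red_step a u) w = red_step a (red_act u w).
Proof.
move=> hw; case: u => [|b t] //=.
by case: eqP => [->|] //=; rewrite red_stepK // red_act_reduced.
Qed.

Lemma red_act_red u w : reduced w -> red_act (red u) w = red_act u w.
Proof. by move=> hw; elim: u => //= a u IH; rewrite red_act_step // IH. Qed.

Lemma red_catr u v : red (u ++ red v) = red (u ++ v).
Proof. by rewrite !red_cat redK. Qed.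

Lemma red_catl u v : red (red u ++ v) = red (u ++ v).
Proof. by rewrite !red_cat red_act_red // red_reduced. Qed.

Lemma red_cat_congr u u' v v' :
  red u = red u' -> red v = red v' -> red (u ++ v) = red (u' ++ v').
Proof. by move=> hu hv; rewrite -red_catl hu red_catl -red_catr hv red_catr. Qed.

Lemma red_ctx a c u v : red u = red v -> red (a ++ u ++ c) = red (a ++ v ++ c).
Proof. by move=> e; apply: red_cat_congr => //; apply: red_cat_congr. Qed.

Lemma finvK : involutive finv.
Proof. by move=> w; rewrite /finv map_rev revK -map_comp (eq_map linvK) map_id. Qed.

Lemma finv_cat u v : finv (u ++ v) = finv v ++ finv u.
Proof. by rewrite /finv map_cat rev_cat. Qed.

Lemma finv_nseq k a : finv (nseq k a) = nseq k (linv a).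
Proof. by rewrite /finv map_nseq rev_nseq. Qed.

Lemma red_cancel u : red (u ++ finv u) = [::].
Proof.
elim: u => //= a u IH.
by rewrite -cat1s finv_cat catA -red_catl IH /= eqxx.
Qed.

Lemma red_cancelV u : red (finv u ++ u) = [::].
Proof. by rewrite -{2}(finvK u) red_cancel. Qed.

Lemma red_cancel_mid a u c : red (a ++ u ++ finv u ++ c) = red (a ++ c).
Proof.
have e : red (u ++ finv u ++ c) = red c by rewrite catA -red_catl red_cancel.
by rewrite -red_catr e red_catr.
Qed.

Lemma red_cancel_r u v : red (u ++ v ++ finv v) = red u.
Proof. by rewrite -[v ++ _]cats0 -catA red_cancel_mid cats0. Qed.

Lemma red_cancelV_mid a u c : red (a ++ finv u ++ u ++ c) = red (a ++ c).
Proof. by rewrite -{2}(finvK u) red_cancel_mid. Qed.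

Lemma red_finv_red w : red (finv (red w)) = red (finv w).
Proof.
have := red_cancel_mid (finv (red w)) w [::]; rewrite !cats0 => <-.
by rewrite catA -red_catl -[red (_ ++ w)]red_catr red_cancelV.
Qed.

Lemma finv_reduced w : reduced w -> reduced (finv w).
Proof.
rewrite /reduced /finv rev_sorted sorted_map.
by apply: sub_sorted => a b /=; rewrite linvK eq_sym.
Qed.

Lemma finv_red w : finv (red w) = red (finv w).
Proof. by rewrite -red_finv_red [RHS]red_id // finv_reduced // red_reduced. Qed.

(** * Q-moves on two-relator presentations *)

Lemma Qequiv_refl P : Qequiv P P.
Proof. exact: rt_refl. Qed.

Lemma Qequiv_trans P Q R : Qequiv P Q -> Qequiv Q R -> Qequiv P R.
Proof. exact: rt_trans. Qed.

Lemma Qequiv_red P Q Q' : Qequiv P Q -> map red Q = map red Q' -> Qequiv P Q'.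
Proof. by rewrite /Qequiv => + <-. Qed.

Lemma Qequiv_move P Q Q' : Qmove (map red P) Q -> Q = map red Q' -> Qequiv P Q'.
Proof. by move=> hPQ eQ; apply: rt_step; rewrite -eQ. Qed.

Section TwoRelators.
Variables r u : word.

Lemma Qequiv_conj0 w : Qequiv [:: r; u] [:: w ++ r ++ finv w; u].
Proof.
apply: (@Qequiv_move [:: r; u]) (@Qconj [:: red r; red u] 0 w erefl) _.
by rewrite /= /fmul red_catl -catA (red_ctx _ _ (redK r)).
Qed.

Lemma Qequiv_conj1 w : Qequiv [:: r; u] [:: r; w ++ u ++ finv w].
Proof.
apply: (@Qequiv_move [:: r; u]) (@Qconj [:: red r; red u] 1 w erefl) _.
by rewrite /= /fmul red_catl -catA (red_ctx _ _ (redK u)).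
Qed.

Lemma Qequiv_mul10 : Qequiv [:: r; u] [:: r; u ++ r].
Proof.
apply: (@Qequiv_move [:: r; u]) (@Qmul [:: red r; red u] 1 0 erefl erefl erefl) _.
by rewrite /= /fmul red_catl red_catr.
Qed.

Lemma Qequiv_inv0 : Qequiv [:: r; u] [:: finv r; u].
Proof.
apply: (@Qequiv_move [:: r; u]) (@Qinv [:: red r; red u] 0 erefl) _.
by rewrite /= finv_red.
Qed.

End TwoRelators.

Lemma Qequiv_mul_conj r u c : Qequiv [:: r; u] [:: r; u ++ finv c ++ r ++ c].
Proof.
apply: Qequiv_trans (Qequiv_conj0 _ _ (finv c)) _; rewrite finvK.
apply: Qequiv_trans (Qequiv_mul10 _ _) _.
apply: Qequiv_red (Qequiv_conj0 _ _ c) _.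
rewrite /= -!catA (red_cancel_mid [::]).
by rewrite /= -[finv c]cats0 red_cancel_mid !cats0.
Qed.

Lemma Qequiv_mul_conjV r u c : Qequiv [:: r; u] [:: r; u ++ finv c ++ finv r ++ c].
Proof.
apply: Qequiv_trans (Qequiv_inv0 _ _) _.
apply: Qequiv_trans (Qequiv_mul_conj _ _ c) _.
by rewrite -{3}(finvK r); apply: Qequiv_inv0.
Qed.

Lemma Qequiv_conjugate r u w w' : w ++ u = u ++ w' -> Qequiv [:: r; w] [:: r; w'].
Proof.
move=> e; apply: Qequiv_red (Qequiv_conj1 r w (finv u)) _.
by rewrite /= finvK e (red_cancelV_mid [::]).
Qed.

(** * Equality in a one-relator group *)

Inductive rel_step (r : word) : word -> word -> Prop :=
  | rel_step_red u v of red u = red v : rel_step r u v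
  | rel_step_ins a c : rel_step r (a ++ c) (a ++ r ++ c).

Definition relequiv (r : word) : relation word :=
  clos_refl_sym_trans word (rel_step r).

Lemma Qequiv_relequiv r u v : relequiv r u v -> Qequiv [:: r; u] [:: r; v].
Proof.
(* [Qequiv] is not known to be symmetric, so both directions are carried
   through the induction. *)
move=> huv.
suff [] : Qequiv [:: r; u] [:: r; v] /\ Qequiv [:: r; v] [:: r; u] by [].
elim: huv => {u v} [_ _ [u v e|a c]|u|u v _ [huv hvu]|u v w _ [huv hvu] _ [hvw hwv]].
- by split; apply: Qequiv_red (Qequiv_refl _) _; rewrite /= e.
- split; first apply: Qequiv_red (Qequiv_mul_conj _ _ c) _.
    by rewrite /= -catA red_cancel_mid.
  apply: Qequiv_red (Qequiv_mul_conjV _ _ c) _.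
  by rewrite /= -!catA (catA a r) red_cancel_mid -catA red_cancel_mid.
- by split; apply: Qequiv_refl.
- by split.
- by split; [apply: Qequiv_trans huv hvw | apply: Qequiv_trans hwv hvu].
Qed.

Section RelEquiv.
Variable r : word.

Lemma relequiv_refl u : relequiv r u u.
Proof. exact: rst_refl. Qed.

Lemma relequiv_sym u v : relequiv r u v -> relequiv r v u.
Proof. exact: rst_sym. Qed.

Lemma relequiv_trans u v w : relequiv r u v -> relequiv r v w -> relequiv r u w.
Proof. exact: rst_trans. Qed.

Lemma relequiv_red u v : red u = red v -> relequiv r u v.
Proof. by move=> e; apply/rst_step/rel_step_red. Qed.

Lemma relequiv_ins a c : relequiv r (a ++ c) (a ++ r ++ c).
Proof. exact/rst_step/rel_step_ins. Qed.

Lemma relequiv_ctx a c u v :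
  relequiv r u v -> relequiv r (a ++ u ++ c) (a ++ v ++ c).
Proof.
elim=> {u v} [_ _ [u v e|a' c']|u|u v _ IH|u v w _ IHuv _ IHvw].
- exact/relequiv_red/red_ctx.
- by have := relequiv_ins (a ++ a') (c' ++ c); rewrite -!catA.
- exact: relequiv_refl.
- exact: relequiv_sym IH.
- exact: relequiv_trans IHuv IHvw.
Qed.

Lemma relequiv_cat u u' v v' :
  relequiv r u u' -> relequiv r v v' -> relequiv r (u ++ v) (u' ++ v').
Proof.
move=> hu hv; apply: (@relequiv_trans _ (u' ++ v)).
  by have := relequiv_ctx [::] v hu.
by have := relequiv_ctx u' [::] hv; rewrite !cats0.
Qed.

Lemma relequiv_flatten (T : Type) (F G : T -> word) (s : seq T) :
  (forall p, relequiv r (F p) (G p)) ->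
  relequiv r (flatten (map F s)) (flatten (map G s)).
Proof.
move=> hFG; elim: s => [|p s IH] /=; first exact: relequiv_refl.
exact: relequiv_cat.
Qed.

End RelEquiv.

Definition central (r w : word) : Prop := forall u, relequiv r (w ++ u) (u ++ w).

Section Central.
Variable r : word.

Lemma central_relequiv w w' : relequiv r w w' -> central r w -> central r w'.
Proof.
move=> hw cw u.
apply: relequiv_trans (relequiv_cat (relequiv_sym hw) (relequiv_refl _ u)) _.
exact: relequiv_trans (cw u) (relequiv_cat (relequiv_refl _ u) hw).
Qed.

Lemma central_cat w1 w2 : central r w1 -> central r w2 -> central r (w1 ++ w2).
Proof.
move=> c1 c2 u; apply: (@relequiv_trans _ _ (w1 ++ u ++ w2)).
  by rewrite -catA; apply: relequiv_cat (relequiv_refl _ _) (c2 u).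
by rewrite !catA; apply: relequiv_cat (c1 u) (relequiv_refl _ _).
Qed.

Lemma central_finv w : central r w -> central r (finv w).
Proof.
move=> cw u.
apply: (@relequiv_trans _ _ (finv w ++ (u ++ w) ++ finv w)).
  by apply: relequiv_red; rewrite -catA (catA _ u) red_cancel_r.
apply: (@relequiv_trans _ _ (finv w ++ (w ++ u) ++ finv w)).
  exact/relequiv_ctx/relequiv_sym.
by apply: relequiv_red; rewrite -catA (red_cancelV_mid [::]).
Qed.

Lemma commute_linv w a :
  relequiv r (w ++ [:: a]) (a :: w) -> relequiv r (w ++ [:: linv a]) (linv a :: w).
Proof.
move=> hwa.
apply: (@relequiv_trans _ _ ([:: linv a] ++ (a :: w) ++ [:: linv a])).
  apply: relequiv_red; rewrite -cat1s.
  by have := red_cancelV_mid [::] [:: a] (w ++ [:: linv a]); rewrite /= linvK.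
apply: (@relequiv_trans _ _ ([:: linv a] ++ (w ++ [:: a]) ++ [:: linv a])).
  exact/relequiv_ctx/relequiv_sym.
apply: relequiv_red; rewrite -!catA -[linv a :: w]cats0 -cat1s.
by have := red_cancel_mid ([:: linv a] ++ w) [:: a] [::]; rewrite -!catA.
Qed.

Lemma central_gens w :
  relequiv r (w ++ [:: lx]) (lx :: w) -> relequiv r (w ++ [:: ly]) (ly :: w) ->
  central r w.
Proof.
move=> hx hy.
have ha a : relequiv r (w ++ [:: a]) (a :: w).
  by case: a => [[] []];
    [exact: commute_linv hy | exact: hy | exact: commute_linv hx | exact: hx].
elim=> [|a u IH]; first by rewrite cats0; apply: relequiv_refl.
rewrite -cat1s catA.
apply: relequiv_trans (relequiv_cat (ha a) (relequiv_refl _ u)) _.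
exact: relequiv_cat (relequiv_refl _ [:: a]) IH.
Qed.

Lemma central_move_r w u v : central r w -> relequiv r (u ++ w ++ v) (u ++ v ++ w).
Proof. by move=> cw; have := relequiv_ctx u [::] (cw v); rewrite !cats0. Qed.

End Central.

Lemma nseqSr (T : Type) k (a : T) : nseq k.+1 a = nseq k a ++ [:: a].
Proof. by rewrite -addn1 nseqD. Qed.

Section IntPowers.
Variable a : letter.
Local Open Scope ring_scope.

Lemma wpowN (k : nat) : wpow a (- k%:Z) = nseq k (linv a).
Proof. by case: k. Qed.

Lemma wpowS m : red (wpow a (m + 1)) = red (wpow a m ++ [:: a]).
Proof.
case: m => k; first by rewrite -PoszD addn1 /wpow nseqSr.
have -> : Negz k + 1 = - k%:Z by rewrite NegzE -addn1 PoszD opprD addrNK.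
rewrite wpowN -[wpow a (Negz k)]/(nseq k.+1 (linv a)) nseqSr -catA.
by rewrite -red_catr /= linvK eqxx cats0.
Qed.

Lemma wpowB1 m : red (wpow a (m - 1)) = red (wpow a m ++ [:: linv a]).
Proof.
rewrite -{2}(subrK 1 m) -red_catl wpowS red_catl -catA.
by rewrite -red_catr /= eqxx cats0.
Qed.

Lemma wpowD m1 m2 : red (wpow a (m1 + m2)) = red (wpow a m1 ++ wpow a m2).
Proof.
elim/int_rec: m2 m1 => [|k IH|k IH] m1; first by rewrite addr0 cats0.
  rewrite -[in LHS]addn1 PoszD addrA wpowS -red_catl IH red_catl -catA.
  by rewrite -[wpow a k.+1]/(nseq k.+1 a) nseqSr.
rewrite -[in LHS]addn1 PoszD opprD addrA wpowB1 -red_catl IH red_catl -catA.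
by rewrite !wpowN nseqSr.
Qed.

End IntPowers.

(** * The relator x^n y^-2 *)

Definition conj_y (w : word) : word := [:: ly] ++ w ++ [:: linv ly].

Definition xn_y2 (n : nat) : word := nseq n lx ++ nseq 2 (linv ly).

Section PowerRelator.
Variable n : nat.
Local Notation r := (xn_y2 n).
Local Notation X := (wpow lx).

Lemma xn_relequiv_y2 : relequiv r (nseq n lx) [:: ly; ly].
Proof.
apply: relequiv_trans _ (relequiv_sym (relequiv_ins _ [::] [:: ly; ly])).
by apply: relequiv_red; rewrite /= -catA -red_catr /= cats0.
Qed.

Lemma central_xn : central r (nseq n lx).
Proof.
apply: central_gens; first by rewrite -nseqSr; apply: relequiv_refl.
apply: relequiv_trans (relequiv_cat xn_relequiv_y2 (relequiv_refl _ [:: ly])) _.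
exact: relequiv_cat (relequiv_refl _ [:: ly]) (relequiv_sym xn_relequiv_y2).
Qed.

Lemma central_y2 : central r [:: ly; ly].
Proof. exact: central_relequiv xn_relequiv_y2 central_xn. Qed.

Lemma central_wpow d : (n %| d)%Z -> central r (X d).
Proof.
case/dvdzP=> q ->.
have central_xkn k : central r (nseq (k * n) lx).
  elim: k => [|k IH] u; first by rewrite cats0; apply: relequiv_refl.
  by rewrite mulSn nseqD; apply: central_cat central_xn IH u.
case: q => k; first by rewrite -PoszM; apply: central_xkn.
by rewrite NegzE mulNr -PoszM wpowN -finv_nseq; apply/central_finv/central_xkn.
Qed.

Lemma conj_y_yV v : relequiv r (conj_y v) ([:: linv ly] ++ v ++ [:: ly]).
Proof.
apply: (@relequiv_trans _ _ ([:: linv ly] ++ ([:: ly; ly] ++ v) ++ [:: linv ly])).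
  by apply: relequiv_red; rewrite (red_cancelV_mid [::] [:: ly]).
apply: relequiv_trans (relequiv_ctx _ _ (central_y2 v)) _.
apply: relequiv_red.
have := @red_ctx ([:: linv ly] ++ v) [::] [:: ly; ly; linv ly] [:: ly] erefl.
by rewrite !cats0 -!catA.
Qed.

End PowerRelator.

(** * The presentations P_n *)

Definition interleave (f g : int -> word) (a b : seq int) : word :=
  flatten [seq f p.1 ++ g p.2 | p <- zip a b].

Lemma interleave_rcons f g a1 b1 a b : size a = size b ->
  (g b1 ++ interleave f g a b) ++ f a1 = interleave g f (b1 :: b) (rcons a a1).
Proof.
rewrite /interleave; elim: a b b1 => [|a2 a IH] [|b2 b] //= b1.
  by rewrite !cats0.
by move=> [hs]; rewrite -(IH b b2 hs) -!catA.
Qed.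

Lemma Qequiv_interleave_rot r f g a1 a b : size b = (size a).+1 ->
  Qequiv [:: r; interleave f g (a1 :: a) b] [:: r; interleave g f b (rcons a a1)].
Proof.
case: b => [|b1 b] //= [hs]; apply: (@Qequiv_conjugate _ (f a1)).
by rewrite -interleave_rcons // /interleave /= -!catA.
Qed.

Lemma flatten_conj (I T : Type) (u : seq T) (F : I -> seq T) (s : seq I) :
  flatten [seq u ++ F p | p <- s] ++ u = u ++ flatten [seq F p ++ u | p <- s].
Proof. by elim: s => [|p s IH] /=; rewrite ?cats0 // -!catA IH. Qed.

Lemma all2_nth (T S : Type) (rT : T -> S -> bool) x0 y0 s t : size s = size t ->
  (forall i, i < size s -> rT (nth x0 s i) (nth y0 t i)) -> all2 rT s t.
Proof.
elim: s t => [|x s IH] [|y t] //= [hs] h.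
by rewrite (h 0) //= IH // => i; apply: (h i.+1).
Qed.

Lemma all2_rcons (T S : Type) (rT : T -> S -> bool) s t x y :
  all2 rT (rcons s x) (rcons t y) = all2 rT s t && rT x y.
Proof.
elim: s t => [|a s IH] [|b t] /=; rewrite ?andbT //.
- by case: t => [|? ?]; rewrite andbF.
- by case: s {IH} => [|? ?]; rewrite andbF.
- by rewrite IH andbA.
Qed.

Definition exps (s : seq int) : seq int := rcons s (last_exp s).

Lemma PnE n ns ms :
  Pn n ns ms = [:: xn_y2 n; interleave (wpow lx) (conj_y \o wpow lx) (exps ns) (exps ms)].
Proof. by []. Qed.

Lemma sum_exps (s : seq int) : (\sum_(c <- exps s) c = 1)%R.
Proof. by rewrite /exps -cats1 big_cat big_seq1 /last_exp /= subrKC. Qed.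

Lemma last_exp_rot (c : int) s : last_exp (rcons s (last_exp (c :: s))) = c.
Proof. by rewrite /last_exp -cats1 big_cat big_seq1 big_cons /=; ring. Qed.

Section Congruence.
Variable n : nat.
Local Open Scope ring_scope.
Local Notation r := (xn_y2 n).
Local Notation X := (wpow lx).
Local Notation Y := (conj_y \o wpow lx).
Local Notation congr_n := (fun c' c : int => c' == c %[mod n%:Z])%Z.

Lemma eqz_mod_sum s' s :
  all2 congr_n s' s -> (\sum_(c <- s') c == \sum_(c <- s) c %[mod n%:Z])%Z.
Proof.
rewrite eqz_mod_dvd; elim: s' s => [|c' s' IH] [|c s] //=.
  by rewrite !big_nil subrr.
case/andP; rewrite eqz_mod_dvd => hc /IH hs.
by rewrite !big_cons opprD addrACA rpredD.
Qed.

Lemma all2_exps s' s : all2 congr_n s' s -> all2 congr_n (exps s') (exps s).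
Proof.
move=> hs; rewrite all2_rcons hs /= /last_exp eqz_mod_dvd opprD addrACA subrr add0r.
by rewrite -opprD rpredN -eqz_mod_dvd eqz_mod_sum.
Qed.

Lemma block_shift a' b' a b : congr_n a' a -> congr_n b' b ->
  relequiv r (X a' ++ Y b') (X a ++ Y b ++ X (a' - a + (b' - b))).
Proof.
move=> hd he; rewrite /= !eqz_mod_dvd in hd he.
set d := a' - a in hd *; set e := b' - b in he *.
have -> : a' = a + d by rewrite /d addrC subrK.
have -> : b' = b + e by rewrite /e addrC subrK.
apply: (@relequiv_trans _ _ (X a ++ X d ++ [:: ly] ++ X b ++ X e ++ [:: linv ly])).
  apply: relequiv_red; rewrite /conj_y /=.
  have := red_cat_congr (wpowD lx a d) (red_ctx [:: ly] [:: linv ly] (wpowD lx b e)).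
  by rewrite -!catA.
apply: relequiv_trans (central_move_r _ _ (central_wpow hd)) _.
apply: (@relequiv_trans _ _ ((X a ++ [:: ly] ++ X b) ++ ([:: linv ly] ++ X d) ++ X e)).
  have := central_move_r (X a ++ [:: ly] ++ X b) ([:: linv ly] ++ X d) (central_wpow he).
  by rewrite -!catA.
apply: relequiv_red.
by rewrite [in RHS]catA -[in RHS]red_catr wpowD red_catr /conj_y -!catA.
Qed.

Lemma interleave_shift a' b' a b :
  all2 congr_n a' a -> all2 congr_n b' b -> size a = size b ->
  relequiv r (interleave X Y a' b') (interleave X Y a b ++
    X (\sum_(c <- a') c - \sum_(c <- a) c + (\sum_(c <- b') c - \sum_(c <- b) c))).
Proof.
rewrite /interleave; elim: a' a b' b => [|a1' a' IH] [|a1 a] [|b1' b'] [|b1 b] //=.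
  by rewrite !big_nil subrr => _ _ _; apply: relequiv_refl.
move=> /andP[h1 ha] /andP[h2 hb] [hs].
apply: relequiv_trans (relequiv_cat (block_shift h1 h2) (IH _ _ _ ha hb hs)) _.
set I := flatten _; set d := _ + _; set D := _ + _.
have hd : (n %| d)%Z by rewrite rpredD // -eqz_mod_dvd.
have := relequiv_ctx (X a1 ++ Y b1) (X D) (central_wpow hd I); rewrite -!catA.
move/relequiv_trans; apply; apply: relequiv_red.
have -> : \sum_(c <- a1' :: a') c - \sum_(c <- a1 :: a) c +
          (\sum_(c <- b1' :: b') c - \sum_(c <- b1 :: b) c) = d + D.
  by rewrite !big_cons /d /D; ring.
by rewrite !catA -[in RHS]red_catr wpowD red_catr -!catA.
Qed.

Lemma Qequiv_Pn_mod ns ms ns' ms' : size ns = size ms ->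
  all2 congr_n ns' ns -> all2 congr_n ms' ms -> Qequiv (Pn n ns ms) (Pn n ns' ms').
Proof.
move=> hs hns hms; rewrite !PnE; apply/Qequiv_relequiv/relequiv_sym.
have := interleave_shift (all2_exps hns) (all2_exps hms).
rewrite !sum_exps subrr cats0; apply.
by rewrite !size_rcons hs.
Qed.

End Congruence.

Lemma Qequiv_Pn_rot n ns ms : size ns = size ms -> 0 < size ns ->
  Qequiv (Pn n ns ms)
    (Pn n (rcons (behead ns) (last_exp ns)) (rcons (behead ms) (last_exp ms))).
Proof.
case: ns => [|n1 ns] //; case: ms => [|m1 ms] // [hs] _.
rewrite !PnE /exps !last_exp_rot /=.
apply: Qequiv_trans (Qequiv_interleave_rot _ _ _ _ _) _.
  by rewrite /= !size_rcons hs.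
by apply: Qequiv_interleave_rot; rewrite !size_rcons hs.
Qed.

Lemma Qequiv_Pn_swap n ns ms : size ms = size ns -> 0 < size ns ->
  Qequiv (Pn n ns ms) (Pn n ms (rcons (behead ns) (last_exp ns))).
Proof.
case: ns => [|n1 ns] // hs _; rewrite !PnE {1 4}/exps last_exp_rot /=.
apply: Qequiv_trans (Qequiv_interleave_rot _ _ _ _ _) _; first by rewrite !size_rcons hs.
pose F (p : int * int) := wpow lx p.1 ++ [:: ly] ++ wpow lx p.2.
apply: Qequiv_trans (Qequiv_relequiv
  (relequiv_flatten (G := fun p => [:: linv ly] ++ F p) _ _)) _.
  move=> p.
  have := relequiv_cat (conj_y_yV n (wpow lx p.1)) (relequiv_refl _ (wpow lx p.2)).
  by rewrite /F -!catA.
apply: (@Qequiv_conjugate _ [:: linv ly]).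
rewrite (flatten_conj _ F); congr (_ ++ _).
by rewrite /interleave; congr flatten; apply: eq_map => p; rewrite /F /conj_y -!catA.
Qed.

Theorem lemma3p5 (n k : nat) (ns ms : seq int) :
  (2 <= n)%N -> (1 <= k)%N -> size ns = k -> size ms = k ->
  all (fun a => a != 0%R) ns -> all (fun a => a != 0%R) ms ->
  [/\ (forall ns' ms' : seq int, size ns' = k -> size ms' = k ->
         (forall i, (i < k)%N ->
            (nth 0%R ns' i = nth 0%R ns i %[mod n%:Z])%Z /\
            (nth 0%R ms' i = nth 0%R ms i %[mod n%:Z])%Z) ->
         Qequiv (Pn n ns ms) (Pn n ns' ms')),
      Qequiv (Pn n ns ms)
             (Pn n (rcons (behead ns) (last_exp ns)) (rcons (behead ms) (last_exp ms)))
    & Qequiv (Pn n ns ms) (Pn n ms (rcons (behead ns) (last_exp ns)))].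
Proof.
move=> _ hk hns hms _ _; split.
- move=> ns' ms' hns' hms' hmod; apply: Qequiv_Pn_mod; first by rewrite hns hms.
    apply: (all2_nth (x0 := 0%R) (y0 := 0%R)) => [|i]; first by rewrite hns hns'.
    by rewrite hns' => /hmod[/eqP].
  apply: (all2_nth (x0 := 0%R) (y0 := 0%R)) => [|i]; first by rewrite hms hms'.
  by rewrite hms' => /hmod[_ /eqP].
- by apply: Qequiv_Pn_rot; rewrite ?hns ?hms.
- by apply: Qequiv_Pn_swap; rewrite ?hns ?hms.
Qed.
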